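(* Consider two CDNs with performance parameters $0\le\beta_1<\beta_2<1$ and prices $w_1,w_2\ge0$ such that each CDN attracts a set of content providers of positive measure (model in the context). Then there exist $\theta_1,\theta_2$ such that for a content provider with sensitivity $\theta\in[0,1]$: if $0\le\theta\le\theta_2$ then $0\ge U(\theta,2)$ and $0\ge U(\theta,1)$ (choosing no CDN is best); if $\theta_2\le\theta\le\theta_1$ then $U(\theta,2)\ge U(\theta,1)$ and $U(\theta,2)\ge0$ (choosing $CDN_2$ is best); if $\theta_1\le\theta\le1$ then $U(\theta,1)\ge U(\theta,2)$ and $U(\theta,1)\ge0$ (choosing $CDN_1$ is best).
   Context: Each $CDN_k$ ($k=1,2$) has a fixed performance parameter $\beta_k\in[0,1)$ and price $w_k\ge0$. There is a continuum of content providers of total mass $\Lambda>0$ with sensitivity parameters $\theta$ uniformly distributed on $[0,1]$. A content provider with sensitivity $\theta$ hiring $CDN_k$ gets payoff $U(\theta,k)=\theta(1-\beta_k)-w_k$; hiring none gives $0$. Each content provider hires at most one CDN, choosing an option of maximum payoff. *)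

From HB Require Import structures.
From mathcomp Require Import all_boot all_order all_algebra.
From mathcomp Require Import all_classical all_reals.
From mathcomp Require Import ereal topology normedtype measure lebesgue_measure.
Set Implicit Arguments. Unset Strict Implicit. Unset Printing Implicit Defensive.
Import Order.TTheory GRing.Theory Num.Theory.
Local Open Scope classical_set_scope.
Local Open Scope ring_scope.

Definition payoff (R : realType) (beta w theta : R) : R :=
  theta * (1 - beta) - w.

Definition attracted (R : realType) (beta w beta' w' : R) : set R :=
  [set theta | 0 <= theta <= 1 /\
     payoff beta' w' theta < payoff beta w theta /\ 0 < payoff beta w theta].

(* Mass of content providers attracted: total mass Lambda times the
   (uniform) Lebesgue measure of the attracted set of sensitivities. *)
Definition attracted_mass (R : realType) (Lambda beta w beta' w' : R)
  : \bar R :=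
  (Lambda%:E * (@lebesgue_measure R) (attracted beta w beta' w'))%E.

From HB Require Import structures.
From mathcomp Require Import all_boot all_order all_algebra.
From mathcomp Require Import all_classical all_reals.
From mathcomp Require Import ereal topology normedtype measure lebesgue_measure.
From mathcomp Require Import lra.
Set Implicit Arguments. Unset Strict Implicit. Unset Printing Implicit Defensive.
Import Order.TTheory GRing.Theory Num.Theory.
Local Open Scope classical_set_scope.
Local Open Scope ring_scope.

(* Payoffs are affine in theta, so each comparison between two options is
   decided by a single threshold: hiring CDN_2 beats no CDN above
   w2 / (1 - beta2), and CDN_1 beats CDN_2 above (w1 - w2) / (beta2 - beta1).
   A provider strictly preferring CDN_2 lies between the two thresholds, so
   they are correctly ordered, and the three regimes follow by chaining the
   comparisons. *)

Lemma attracted_mass_gt0_neq0 (R : realType) (Lambda beta w beta' w' : R) :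
  (0 < attracted_mass Lambda beta w beta' w')%E ->
  attracted beta w beta' w' !=set0.
Proof.
move=> mass_gt0; apply/set0P; apply: contraTneq mass_gt0 => empty.
by rewrite /attracted_mass empty measure0 mule0 ltxx.
Qed.

Section PayoffThresholds.
Variable R : realType.

Definition entry_threshold (beta w : R) : R := w / (1 - beta).

Definition switch_threshold (beta1 w1 beta2 w2 : R) : R :=
  (w1 - w2) / (beta2 - beta1).

Lemma payoff_ge0 (beta w theta : R) : beta < 1 ->
  (0 <= payoff beta w theta) = (entry_threshold beta w <= theta).
Proof. by move=> lt_beta1; rewrite subr_ge0 ler_pdivrMr // subr_gt0. Qed.

Lemma payoff_le0 (beta w theta : R) : beta < 1 ->
  (payoff beta w theta <= 0) = (theta <= entry_threshold beta w).
Proof. by move=> lt_beta1; rewrite subr_le0 ler_pdivlMr // subr_gt0. Qed.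

Variables beta1 w1 beta2 w2 : R.
Hypothesis lt_beta12 : beta1 < beta2.

Lemma payoff1_le_payoff2 (theta : R) :
  (payoff beta1 w1 theta <= payoff beta2 w2 theta) =
  (theta <= switch_threshold beta1 w1 beta2 w2).
Proof.
rewrite /payoff ler_pdivlMr ?subr_gt0 //.
by apply/idP/idP => ?; lra.
Qed.

Lemma payoff2_le_payoff1 (theta : R) :
  (payoff beta2 w2 theta <= payoff beta1 w1 theta) =
  (switch_threshold beta1 w1 beta2 w2 <= theta).
Proof.
rewrite /payoff ler_pdivrMr ?subr_gt0 //.
by apply/idP/idP => ?; lra.
Qed.

Lemma entry_le_switch : beta2 < 1 ->
  attracted beta2 w2 beta1 w1 !=set0 ->
  entry_threshold beta2 w2 <= switch_threshold beta1 w1 beta2 w2.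
Proof.
move=> lt_beta21 [theta [_ [/ltW better /ltW profitable]]].
rewrite payoff1_le_payoff2 in better.
rewrite payoff_ge0 // in profitable.
exact: le_trans profitable better.
Qed.

End PayoffThresholds.

Theorem lemma2 (R : realType) (Lambda beta1 beta2 w1 w2 : R) :
  0 < Lambda ->
  0 <= beta1 -> beta1 < beta2 -> beta2 < 1 ->
  0 <= w1 -> 0 <= w2 ->
  (0 < attracted_mass Lambda beta1 w1 beta2 w2)%E ->
  (0 < attracted_mass Lambda beta2 w2 beta1 w1)%E ->
  exists theta1 theta2 : R,
    forall theta : R, 0 <= theta <= 1 ->
      (0 <= theta <= theta2 ->
         payoff beta2 w2 theta <= 0 /\ payoff beta1 w1 theta <= 0) /\
      (theta2 <= theta <= theta1 ->
         payoff beta1 w1 theta <= payoff beta2 w2 theta /\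
         0 <= payoff beta2 w2 theta) /\
      (theta1 <= theta <= 1 ->
         payoff beta2 w2 theta <= payoff beta1 w1 theta /\
         0 <= payoff beta1 w1 theta).
Proof.
move=> _ _ lt_beta12 lt_beta21 _ _ _ /attracted_mass_gt0_neq0 attracted2.
have entry_switch := entry_le_switch lt_beta12 lt_beta21 attracted2.
exists (switch_threshold beta1 w1 beta2 w2), (entry_threshold beta2 w2).
move=> theta _; split; [|split].
- move=> /andP[_ le_entry].
  have better : payoff beta1 w1 theta <= payoff beta2 w2 theta.
    by rewrite payoff1_le_payoff2 //; apply: le_trans entry_switch.
  have unprofitable : payoff beta2 w2 theta <= 0 by rewrite payoff_le0.
  by split; last apply: le_trans better unprofitable.
- move=> /andP[ge_entry le_switch].
  by rewrite payoff1_le_payoff2 // payoff_ge0.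
- move=> /andP[ge_switch _].
  have better : payoff beta2 w2 theta <= payoff beta1 w1 theta.
    by rewrite payoff2_le_payoff1.
  have profitable : 0 <= payoff beta2 w2 theta.
    by rewrite payoff_ge0 //; apply: le_trans ge_switch.
  by split; last apply: le_trans profitable better.
Qed.
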